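(* For every $\mathrm{CCS}^-$ process $P$ that is not divergent and every $P'$ with $P\xrightarrow{\tau}P'$, we have $P\not\sim P'$.
   Context: $\mathrm{CCS}^-$ (CCScore without restriction) processes are given by the grammar $P,Q ::= 0 \mid a.P \mid \overline{a}.P \mid P\,|\,Q \mid\ !P$, where $a$ ranges over an infinite set of names. Actions are inputs $a$, outputs $\overline{a}$ (visible actions) and $\tau$. Transitions: $a.P \xrightarrow{a} P$; $\overline{a}.P \xrightarrow{\overline{a}} P$; if $P\xrightarrow{\gamma}P'$ then $P|Q\xrightarrow{\gamma}P'|Q$ and $Q|P\xrightarrow{\gamma}Q|P'$; if $P\xrightarrow{\overline a}P'$ and $Q\xrightarrow{a}Q'$ then $P|Q\xrightarrow{\tau}P'|Q'$ and $Q|P\xrightarrow{\tau}Q'|P'$; if $P\xrightarrow{\gamma}P'$ then $!P\xrightarrow{\gamma}P'\,|\,!P$; if $P\xrightarrow{a}P'$ and $P\xrightarrow{\overline a}P''$ then $!P\xrightarrow{\tau}P'|P''|\,!P$. A process is divergent if it has an infinite sequence of $\tau$-transitions; a relation $\mathcal R$ is divergence-sensitive if $P\,\mathcal R\,Q$ implies ($P$ divergent iff $Q$ divergent). Strong bisimilarity $\sim$ is the union of all symmetric divergence-sensitive relations $\mathcal R$ such that $P\,\mathcal R\,Q$ and $P\xrightarrow{\alpha}P'$ imply $Q\xrightarrow{\alpha}Q'$ for some $Q'$ with $P'\,\mathcal R\,Q'$. *)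

(* CCS^- (CCScore without restriction). *)
From Stdlib Require Import Arith.

(* Names: an infinite set, represented by nat. *)
Definition name := nat.

Inductive proc : Type :=
| Nil : proc
| In : name -> proc -> proc
| Out : name -> proc -> proc
| Par : proc -> proc -> proc
| Bang : proc -> proc.

Inductive act : Type :=
| AIn : name -> act
| AOut : name -> act
| ATau : act.

Inductive step : proc -> act -> proc -> Prop :=
| st_in : forall a P, step (In a P) (AIn a) P
| st_out : forall a P, step (Out a P) (AOut a) P
| st_parl : forall P Q g P', step P g P' -> step (Par P Q) g (Par P' Q)
| st_parr : forall P Q g P', step P g P' -> step (Par Q P) g (Par Q P')
| st_coml : forall P Q a P' Q',
    step P (AOut a) P' -> step Q (AIn a) Q' -> step (Par P Q) ATau (Par P' Q')
| st_comr : forall P Q a P' Q',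
    step P (AOut a) P' -> step Q (AIn a) Q' -> step (Par Q P) ATau (Par Q' P')
| st_bang : forall P g P', step P g P' -> step (Bang P) g (Par P' (Bang P))
| st_bangcom : forall P a P' P'',
    step P (AIn a) P' -> step P (AOut a) P'' ->
    step (Bang P) ATau (Par (Par P' P'') (Bang P)).

Definition divergent (P : proc) : Prop :=
  exists f : nat -> proc, f 0 = P /\ forall n, step (f n) ATau (f (S n)).

Definition symmetric_rel (R : proc -> proc -> Prop) : Prop :=
  forall P Q, R P Q -> R Q P.

Definition divergence_sensitive (R : proc -> proc -> Prop) : Prop :=
  forall P Q, R P Q -> (divergent P <-> divergent Q).

Definition is_simulation (R : proc -> proc -> Prop) : Prop :=
  forall P Q, R P Q -> forall alpha P', step P alpha P' ->
    exists Q', step Q alpha Q' /\ R P' Q'.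

Definition bisimilar (P Q : proc) : Prop :=
  exists R : proc -> proc -> Prop,
    symmetric_rel R /\ divergence_sensitive R /\ is_simulation R /\ R P Q.

(* If [P] is bisimilar to a τ-derivative [P'], the simulation property lets
   [P'] answer the move [P -τ-> P'] by a τ-move to some [P''] related to [P'];
   iterating, [P -τ-> P' -τ-> P'' -τ-> ...] is an infinite τ-run, so [P]
   diverges. *)
From Stdlib Require Import ClassicalEpsilon.

Lemma dependent_choice_run {A : Type} (r : A -> A -> Prop) (X : A -> Prop) :
  (forall x, X x -> exists y, r x y /\ X y) ->
  forall x0, X x0 -> exists f : nat -> A, f 0 = x0 /\ forall n, r (f n) (f (S n)).
Proof.
  intros Hsucc x0 Hx0.
  pose (witness := fun s : {x | X x} =>
    constructive_indefinite_description _ (Hsucc _ (proj2_sig s))).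
  pose (next := fun s => exist X (proj1_sig (witness s)) (proj2 (proj2_sig (witness s)))).
  assert (Hnext : forall s, r (proj1_sig s) (proj1_sig (next s)))
    by (intro s; exact (proj1 (proj2_sig (witness s)))).
  exists (fun n => proj1_sig (Nat.iter n next (exist X x0 Hx0))).
  split; [reflexivity | intro n; apply Hnext].
Qed.

Lemma divergent_of_tau_closed (X : proc -> Prop) :
  (forall P, X P -> exists P', step P ATau P' /\ X P') ->
  forall P, X P -> divergent P.
Proof. apply dependent_choice_run. Qed.

Lemma simulation_tau_derivative_divergent (R : proc -> proc -> Prop) P P' :
  is_simulation R -> R P P' -> step P ATau P' -> divergent P.
Proof.
  intros Hsim HR Hst.
  apply (divergent_of_tau_closed (fun Q => exists Q', R Q Q' /\ step Q ATau Q')).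
  - intros Q [Q' [HQ HQs]].
    destruct (Hsim Q Q' HQ ATau Q' HQs) as [Q'' [HQ's HQ']].
    exists Q'; split; [exact HQs | exists Q''; split; assumption].
  - exists P'; split; assumption.
Qed.

Theorem mainTheorem9 :
  forall P P' : proc, ~ divergent P -> step P ATau P' -> ~ bisimilar P P'.
Proof.
  intros P P' Hnd Hst [R [_ [_ [Hsim HR]]]].
  exact (Hnd (simulation_tau_derivative_divergent R P P' Hsim HR Hst)).
Qed.
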